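(* Let \(\mathbb{T} = (T, \mu)\) be a semimonad on \(\mathbf{Set}\) and let \(k \geq 1\). The assignment \((A,(\alpha_i)_{i=1}^k) \mapsto \mathrm{Role}_\mathbb{T}(A,(\alpha_i)_{i=1}^k)\) extends to a functor \[\mathrm{Role}_\mathbb{T} \colon k\mathbf{Coalg}(T)_\mathsf{PR} \to \mathbf{SGrp}_\mathsf{Q}.\] That is, every positional reduction of \(k\)-relational \(T\)-coalgebras induces a surjective semigroup homomorphism between the corresponding semigroups of roles, functorially.
   Context: A semimonad on \(\mathbf{Set}\) is a pair \((T,\mu)\) with \(T\colon \mathbf{Set}\to\mathbf{Set}\) a functor and \(\mu\colon TT\Rightarrow T\) a natural transformation with \(\mu\circ T\mu = \mu \circ \mu_T\). A \(T\)-coalgebra is a set \(A\) with a function \(\alpha\colon A \to T(A)\); a homomorphism \((A,\alpha)\to(A',\alpha')\) is a function \(f\colon A\to A'\) with \(\alpha'\circ f = T(f)\circ \alpha\). A \(k\)-relational \(T\)-coalgebra is a pair \((A,(\alpha_i)_{i=1}^k)\) of a set \(A\) and \(k\) \(T\)-coalgebra structures \(\alpha_i\colon A\to T(A)\); a map \((A,(\alpha_i))\to(A',(\alpha'_i))\) is a function \(A\to A'\) that is a \(T\)-coalgebra homomorphism \((A,\alpha_i)\to(A',\alpha'_i)\) for each \(i\). A positional reduction is such a map whose underlying function is surjective; \(k\mathbf{Coalg}(T)_\mathsf{PR}\) denotes the category of \(k\)-relational \(T\)-coalgebras and positional reductions. The Kleisli composite of \(\beta\colon A\to T(A)\) after \(\alpha\colon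 A \to T(A)\) is \(\beta \ast \alpha = \mu_A\circ T(\beta)\circ\alpha\colon A\to T(A)\); this makes the set of all \(T\)-coalgebra structures on \(A\) a semigroup \(\mathbf{Set}_\mathbb{T}(A,A)\). The semigroup of roles \(\mathrm{Role}_\mathbb{T}(A,(\alpha_i)_{i=1}^k)\) is the sub-semigroup of \(\mathbf{Set}_\mathbb{T}(A,A)\) generated by \(\alpha_1,\dots,\alpha_k\). \(\mathbf{SGrp}_\mathsf{Q}\) is the category of semigroups and surjective semigroup homomorphisms. *)

From mathcomp Require Import all_boot.
Set Implicit Arguments.
Unset Strict Implicit.
Unset Printing Implicit Defensive.

Record semimonad := Semimonad {
  Tobj :> Type -> Type;
  Tmap : forall A B : Type, (A -> B) -> Tobj A -> Tobj B;
  Tmap_id : forall (A : Type) (x : Tobj A), Tmap (fun a : A => a) x = x;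
  Tmap_comp : forall (A B C : Type) (f : A -> B) (g : B -> C) (x : Tobj A),
      Tmap (fun a => g (f a)) x = Tmap g (Tmap f x);
  mu : forall A : Type, Tobj (Tobj A) -> Tobj A;
  mu_natural : forall (A B : Type) (f : A -> B) (x : Tobj (Tobj A)),
      mu (Tmap (Tmap f) x) = Tmap f (mu x);
  mu_assoc : forall (A : Type) (x : Tobj (Tobj (Tobj A))),
      mu (Tmap (@mu A) x) = mu (mu x)
}.

Section Defs.
Variable M : semimonad.

Definition kcomp (A : Type) (beta alpha : A -> M A) : A -> M A :=
  fun a => mu (Tmap beta (alpha a)).

Definition coalg_hom (A A' : Type) (alpha : A -> M A) (alpha' : A' -> M A')
  (f : A -> A') : Prop :=
  forall a : A, alpha' (f a) = Tmap f (alpha a).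

Definition pos_red (k : nat) (A A' : Type) (al : 'I_k -> A -> M A)
  (al' : 'I_k -> A' -> M A') (f : A -> A') : Prop :=
  (forall y : A', exists x : A, f x = y) /\
  (forall i : 'I_k, coalg_hom (al i) (al' i) f).

Inductive in_role (k : nat) (A : Type) (al : 'I_k -> A -> M A) :
  (A -> M A) -> Prop :=
| in_role_gen : forall i : 'I_k, in_role al (al i)
| in_role_comp : forall beta gamma : A -> M A,
    in_role al beta -> in_role al gamma -> in_role al (kcomp beta gamma).

Definition Role (k : nat) (A : Type) (al : 'I_k -> A -> M A) : Type :=
  {beta : A -> M A | in_role al beta}.

Definition role_mul (k : nat) (A : Type) (al : 'I_k -> A -> M A)
  (b c : Role al) : Role al :=
  exist _ (kcomp (proj1_sig b) (proj1_sig c))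
        (in_role_comp (proj2_sig b) (proj2_sig c)).

End Defs.

From mathcomp Require Import all_boot.
From Stdlib Require Import ClassicalEpsilon FunctionalExtensionality ProofIrrelevance.

(* A positional reduction f relates each generator [al i] to [al' i] by a
   coalgebra homomorphism, and Kleisli composition preserves this relation, so
   every role beta of A has an image role beta' of A' with f : beta -> beta'
   (and every role of A' has such a preimage).  As f is surjective, beta' is
   determined by beta through beta' (f a) = T f (beta a); the homomorphism,
   surjectivity and functoriality properties all follow from this uniqueness. *)

Section CoalgebraHomomorphisms.

Variable M : semimonad.

Lemma coalg_hom_id {A : Type} (beta : A -> M A) :
  coalg_hom beta beta (fun a => a).
Proof. by move=> a; rewrite Tmap_id. Qed.

Lemma coalg_hom_comp {A A' A'' : Type} (beta : A -> M A) (beta' : A' -> M A')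
    (beta'' : A'' -> M A'') (f : A -> A') (g : A' -> A'') :
  coalg_hom beta beta' f -> coalg_hom beta' beta'' g ->
  coalg_hom beta beta'' (fun a => g (f a)).
Proof. by move=> hf hg a; rewrite hg hf -Tmap_comp. Qed.

Lemma coalg_hom_kcomp {A A' : Type} (f : A -> A') (b c : A -> M A)
    (b' c' : A' -> M A') :
  coalg_hom b b' f -> coalg_hom c c' f ->
  coalg_hom (kcomp b c) (kcomp b' c') f.
Proof.
move=> hb hc a; rewrite /kcomp hc -Tmap_comp.
have -> : (fun x => b' (f x)) = (fun x => Tmap f (b x)).
  by apply: functional_extensionality => x; rewrite hb.
by rewrite Tmap_comp mu_natural.
Qed.

Lemma coalg_hom_unique {A A' : Type} (f : A -> A')
    (f_surj : forall y : A', exists x : A, f x = y)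
    (beta : A -> M A) (beta1 beta2 : A' -> M A') :
  coalg_hom beta beta1 f -> coalg_hom beta beta2 f -> beta1 = beta2.
Proof.
move=> h1 h2; apply: functional_extensionality => y.
by case: (f_surj y) => x <-; rewrite h1 h2.
Qed.

End CoalgebraHomomorphisms.

Section Roles.

Variables (M : semimonad) (k : nat).

Lemma role_eq {A : Type} {al : 'I_k -> A -> M A} (b c : Role al) :
  proj1_sig b = proj1_sig c -> b = c.
Proof. by apply: eq_sig_hprop => x; apply: proof_irrelevance. Qed.

Lemma in_role_rel {A A' : Type} (al : 'I_k -> A -> M A)
    (al' : 'I_k -> A' -> M A') (R : (A -> M A) -> (A' -> M A') -> Prop) :
  (forall i, R (al i) (al' i)) ->
  (forall b c b' c', R b b' -> R c c' -> R (kcomp b c) (kcomp b' c')) ->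
  forall beta, in_role al beta -> exists2 beta', in_role al' beta' & R beta beta'.
Proof.
move=> Rgen Rcomp beta; elim=> [i | b c _ [b' rb' Rb] _ [c' rc' Rc]].
  by exists (al' i); [exact: in_role_gen | exact: Rgen].
by exists (kcomp b' c'); [exact: in_role_comp | exact: Rcomp].
Qed.

Variables (A A' : Type) (al : 'I_k -> A -> M A) (al' : 'I_k -> A' -> M A')
  (f : A -> A') (hf : pos_red al al' f).

Lemma role_image_exists (b : Role al) :
  exists b' : Role al', coalg_hom (proj1_sig b) (proj1_sig b') f.
Proof.
case: b => beta /= /(in_role_rel al al' (fun b b' => coalg_hom b b' f)).
case=> [||beta' rb' hb]; [exact: hf.2 | exact: coalg_hom_kcomp |].
by exists (exist _ beta' rb').
Qed.

Lemma role_preimage_exists (b' : Role al') :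
  exists b : Role al, coalg_hom (proj1_sig b) (proj1_sig b') f.
Proof.
case: b' => beta' /= /(in_role_rel al' al (fun b' b => coalg_hom b b' f)).
case=> [||beta rb hb]; [exact: hf.2 | by move=> *; exact: coalg_hom_kcomp |].
by exists (exist _ beta rb).
Qed.

Definition role_map (b : Role al) : Role al' :=
  proj1_sig (constructive_indefinite_description _ (role_image_exists b)).

Lemma role_mapP (b : Role al) :
  coalg_hom (proj1_sig b) (proj1_sig (role_map b)) f.
Proof. exact: proj2_sig (constructive_indefinite_description _ (role_image_exists b)). Qed.

Lemma role_map_unique (b : Role al) (b' : Role al') :
  coalg_hom (proj1_sig b) (proj1_sig b') f -> role_map b = b'.
Proof.
move=> hb; apply: role_eq.
exact: coalg_hom_unique hf.1 _ _ _ (role_mapP b) hb.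
Qed.

Lemma role_map_mul (b c : Role al) :
  role_map (role_mul b c) = role_mul (role_map b) (role_map c).
Proof. by apply: role_map_unique; apply: coalg_hom_kcomp; apply: role_mapP. Qed.

Lemma role_map_surj (b' : Role al') : exists b : Role al, role_map b = b'.
Proof.
by case: (role_preimage_exists b') => b hb; exists b; apply: role_map_unique.
Qed.

End Roles.

Theorem theorem5p6 (M : semimonad) (k : nat) (hk : 0 < k) :
  exists F : forall (A A' : Type) (al : 'I_k -> A -> M A)
                    (al' : 'I_k -> A' -> M A') (f : A -> A'),
               pos_red al al' f -> Role al -> Role al',
    (* each F f is a semigroup homomorphism *)
    (forall A A' al al' f (hf : @pos_red M k A A' al al' f) (b c : Role al),
        F A A' al al' f hf (role_mul b c) =
        role_mul (F A A' al al' f hf b) (F A A' al al' f hf c)) /\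
    (* each F f is surjective *)
    (forall A A' al al' f (hf : @pos_red M k A A' al al' f) (b' : Role al'),
        exists b : Role al, F A A' al al' f hf b = b') /\
    (* F f is induced by f: f is a coalgebra homomorphism beta -> F f beta *)
    (forall A A' al al' f (hf : @pos_red M k A A' al al' f) (b : Role al),
        coalg_hom (proj1_sig b) (proj1_sig (F A A' al al' f hf b)) f) /\
    (* functoriality: identities *)
    (forall A al (hid : @pos_red M k A A al al (fun a => a)) (b : Role al),
        F A A al al (fun a => a) hid b = b) /\
    (* functoriality: composition *)
    (forall A A' A'' al al' al'' (f : A -> A') (g : A' -> A'')
            (hf : @pos_red M k A A' al al' f) (hg : pos_red al' al'' g)
            (hgf : pos_red al al'' (fun a => g (f a))) (b : Role al),
        F A A'' al al'' (fun a => g (f a)) hgf b =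
        F A' A'' al' al'' g hg (F A A' al al' f hf b)).
Proof.
exists (@role_map M k); split; [|split; [|split; [|split]]].
- exact: role_map_mul.
- exact: role_map_surj.
- exact: role_mapP.
- move=> A al hid b; apply: role_map_unique; exact: coalg_hom_id.
- move=> A A' A'' al al' al'' f g hf hg hgf b; apply: role_map_unique.
  by apply: coalg_hom_comp; apply: role_mapP.
Qed.
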